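(* Let $S\subset\mathbb{R}^2$ be a finite point set and $I=\{p_1,\dots,p_n\}$ a finite point set disjoint from $S$, with $S\cup I$ in general position. Let $R\subseteq S$ be any subset containing every $q\in S$ such that some $p_i\in I$ conflicts (with respect to $S$) with $V_q(S)$. Let $U_R$ be the set of Voronoi edge bends and Voronoi vertices of $\mathrm{Vor}_Q(R)$ that conflict (with respect to $R$) with at least one of $p_1,\dots,p_n$, and for each $i$ let $V_S|_{p_i}$ be the set of Voronoi edge bends and Voronoi vertices of $\mathrm{Vor}_Q(S)$ that conflict (with respect to $S$) with $p_i$. Then $U_R\subseteq\bigcup_{i=1}^n V_S|_{p_i}$.
   Context: Let $Q\subset\mathbb{R}^2$ be a convex polygon with a constant number of vertices containing the origin in its interior; $d_Q(x,y)=\min\{\lambda\ge 0: y\in\lambda Q+x\}$; $Q^*=\{-x:x\in Q\}$. For a finite set $Y$ and $p\in Y$, $V_p(Y)=\{x: d_Q(p,x)\le d_Q(q,x)\ \forall q\in Y\}$ and $\mathrm{Vor}_Q(Y)$ is the resulting subdivision. Voronoi edges are polygonal curves; their interior vertices are Voronoi edge bends. For $x\in\mathbb{R}^2$, the largest homothetic copy $\lambda Q^*+x$ ($\lambda\ge0$) of $Q^*$ centered at $x$ whose interior avoids $Y$ is denoted $Q^*_x$ (w.r.t. $Y$); a point $p$ conflicts with $x$ w.r.t. $Y$ if $p\in Q^*_x$, and conflicts with a set if it conflicts with some point of it. General position means: no two sides of $Q$ are parallel; no line through two of the points is parallel to a side of $Q$; no four points lie on the boundary of a homothetic copy of $Q^*$.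 *)

From Stdlib Require Import Reals List.
From Coquelicot Require Import Rbar Lub.
Open Scope R_scope.

Definition point : Type := (R * R)%type.
Definition padd (a b : point) : point := (fst a + fst b, snd a + snd b).
Definition psub (a b : point) : point := (fst a - fst b, snd a - snd b).
Definition pscale (l : R) (a : point) : point := (l * fst a, l * snd a).
Definition cross (a b : point) : R := fst a * snd b - snd a * fst b.
Definition origin : point := (0, 0).

(* topological interior in R^2 (max-norm balls give the usual topology) *)
Definition interior (A : point -> Prop) (y : point) : Prop :=
  exists eps, 0 < eps /\ forall z : point,
    Rabs (fst z - fst y) < eps -> Rabs (snd z - snd y) < eps -> A z.
Definition boundary (A : point -> Prop) (y : point) : Prop :=
  A y /\ ~ interior A y.

Definition convex (C : point -> Prop) : Prop :=
  forall a b t, C a -> C b -> 0 <= t <= 1 -> C (padd a (pscale t (psub b a))).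
Definition conv (vs : list point) (z : point) : Prop :=
  forall C, convex C -> (forall v, In v vs -> C v) -> C z.

Definition convex_polygon (Q : point -> Prop) : Prop :=
  exists vs : list point, forall z, Q z <-> conv vs z.
Definition good_Q (Q : point -> Prop) : Prop :=
  convex_polygon Q /\ interior Q origin.

Definition homot (Q : point -> Prop) (l : R) (x : point) (y : point) : Prop :=
  exists z, Q z /\ y = padd x (pscale l z).
Definition Qstar (Q : point -> Prop) (z : point) : Prop := Q (pscale (-1) z).

Definition dQ (Q : point -> Prop) (x y : point) : R :=
  real (Glb_Rbar (fun l => 0 <= l /\ homot Q l x y)).

Definition Vcell (Q : point -> Prop) (Y : list point) (p : point) (x : point) : Prop :=
  forall q, In q Y -> dQ Q p x <= dQ Q q x.

Definition Vor_vertex (Q : point -> Prop) (Y : list point) (x : point) : Prop :=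
  exists p1 p2 p3, In p1 Y /\ In p2 Y /\ In p3 Y /\
    p1 <> p2 /\ p1 <> p3 /\ p2 <> p3 /\
    Vcell Q Y p1 x /\ Vcell Q Y p2 x /\ Vcell Q Y p3 x.

Definition in_a_line (A : point -> Prop) : Prop :=
  exists a d : point, d <> origin /\ forall y, A y -> cross d (psub y a) = 0.

(* Voronoi edge bend of Vor_Q(Y): a point x on the Voronoi edge between
   two sites p <> q (x in V_p and V_q but not a Voronoi vertex) at which
   the edge is not locally straight, i.e. an interior vertex of the
   polygonal curve. *)
Definition Vor_bend (Q : point -> Prop) (Y : list point) (x : point) : Prop :=
  exists p q, In p Y /\ In q Y /\ p <> q /\
    Vcell Q Y p x /\ Vcell Q Y q x /\ ~ Vor_vertex Q Y x /\
    forall eps, 0 < eps ->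
      ~ in_a_line (fun y => Vcell Q Y p y /\ Vcell Q Y q y /\
                     Rabs (fst y - fst x) < eps /\ Rabs (snd y - snd x) < eps).

Definition Vor_feature (Q : point -> Prop) (Y : list point) (x : point) : Prop :=
  Vor_bend Q Y x \/ Vor_vertex Q Y x.

Definition avoids (Q : point -> Prop) (Y : list point) (x : point) (l : R) : Prop :=
  0 <= l /\ forall q, In q Y -> ~ interior (homot (Qstar Q) l x) q.
Definition Qstar_scale (Q : point -> Prop) (Y : list point) (x : point) (l : R) : Prop :=
  avoids Q Y x l /\ forall m, avoids Q Y x m -> m <= l.

Definition conflicts (Q : point -> Prop) (Y : list point) (p x : point) : Prop :=
  exists l, Qstar_scale Q Y x l /\ homot (Qstar Q) l x p.
Definition conflicts_set (Q : point -> Prop) (Y : list point) (p : point)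
  (A : point -> Prop) : Prop :=
  exists x, A x /\ conflicts Q Y p x.

(* sides of Q: segments [a,b], a <> b, in Q whose line supports Q *)
Definition side_seg (Q : point -> Prop) (a b : point) : Prop :=
  Q a /\ Q b /\ a <> b /\
  ((forall z, Q z -> 0 <= cross (psub b a) (psub z a)) \/
   (forall z, Q z -> cross (psub b a) (psub z a) <= 0)).

Definition general_position (Q : point -> Prop) (P : list point) : Prop :=
  (* no two (distinct) sides of Q are parallel *)
  (forall a b c d, side_seg Q a b -> side_seg Q c d ->
     cross (psub b a) (psub d c) = 0 -> cross (psub b a) (psub c a) = 0) /\
  (forall p q a b, In p P -> In q P -> p <> q -> side_seg Q a b ->
     cross (psub q p) (psub b a) <> 0) /\
  (forall p1 p2 p3 p4 x l, In p1 P -> In p2 P -> In p3 P -> In p4 P ->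
     NoDup (p1 :: p2 :: p3 :: p4 :: nil) -> 0 <= l ->
     ~ (boundary (homot (Qstar Q) l x) p1 /\ boundary (homot (Qstar Q) l x) p2 /\
        boundary (homot (Qstar Q) l x) p3 /\ boundary (homot (Qstar Q) l x) p4)).

From Pilot Require Import Defs.
From Stdlib Require Import Reals List Lra Classical.
From Coquelicot Require Import Rbar Lub.
Open Scope R_scope.

(* Write d(q, y) for the gauge distance dQ Q q y.  The radius of Q*_y w.r.t. a
   site list Y is the distance from y to its nearest sites, and p conflicts
   with y iff y lies in the copy (that radius) Q + p.  Let x be a feature of
   Vor(R) in conflict with p, at radius l.  Walking from p to x, no site of S
   can come closer than t l to the point reached at time t: the nearest sites
   of S to such a point are conflicted by p, hence lie in R, and R-sites stay
   far by the triangle inequality; a real induction on [0,1] makes this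
   rigorous.  So x has radius l w.r.t. S as well, p conflicts with x w.r.t. S,
   all nearest sites of x in S lie in R, and by a margin argument Vor(R) and
   Vor(S) have the same cells near x, which transports vertices and bends. *)

Ltac point_eq :=
  apply injective_projections; unfold padd, pscale, psub, origin; simpl; field; try lra.

(* A gauge body: a convex set containing the box of half-width e0 around the
   origin.  Every Q satisfying good_Q is one, and it is all the proof needs. *)
Definition gauge_body (Q : point -> Prop) (e0 : R) : Prop :=
  convex Q /\ 0 < e0 /\ forall z, Rabs (fst z) < e0 -> Rabs (snd z) < e0 -> Q z.

Lemma good_Q_gauge_body Q : good_Q Q -> exists e0, gauge_body Q e0.
Proof.
  intros [[vs Hvs] [eps [Heps Hin]]]. exists eps. repeat split; auto.
  - intros a b t Ha Hb Ht. apply Hvs. apply Hvs in Ha. apply Hvs in Hb.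
    intros C HC Hv. apply HC; [apply Ha|apply Hb|]; auto.
  - intros z H1 H2. apply Hin; simpl; rewrite Rminus_0_r; auto.
Qed.

Lemma ratio_unit l l' : 0 <= l -> l <= l' -> 0 < l' -> 0 <= l / l' <= 1.
Proof.
  intros. assert (E : l / l' * l' = l) by (field; lra). split; nra.
Qed.

Lemma Rabs_div_lt x l e : 0 < l -> Rabs x < l * e -> Rabs (x / l) < e.
Proof.
  intros Hl H. unfold Rdiv. rewrite Rabs_mult, Rabs_inv, (Rabs_pos_eq l) by lra.
  assert (E : Rabs x * / l * l = Rabs x) by (field; lra). nra.
Qed.

Definition l1dist (a b : point) : R := Rabs (fst b - fst a) + Rabs (snd b - snd a).

Lemma l1dist_ge0 a b : 0 <= l1dist a b.
Proof.
  unfold l1dist. pose proof (Rabs_pos (fst b - fst a)). pose proof (Rabs_pos (snd b - snd a)).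
  lra.
Qed.

Section Gauge.
Variables (Q : point -> Prop) (e0 : R).
Hypothesis HQ : gauge_body Q e0.

Lemma gauge_origin : Q origin.
Proof. destruct HQ as [_ [He Hb]]. apply Hb; simpl; rewrite Rabs_R0; lra. Qed.

(* The copies l Q + a grow with l, since Q is star-shaped about the origin. *)
Lemma homot_mono l l' a b :
  0 <= l -> l <= l' -> homot Q l a b -> homot Q l' a b.
Proof.
  intros H0 H1 [z [Hz ->]].
  destruct (Req_dec l' 0) as [E|E].
  - assert (l = 0) by lra. subst. exists z; auto.
  - exists (padd origin (pscale (l / l') (psub z origin))). split.
    + apply (proj1 HQ); [exact gauge_origin|exact Hz|apply ratio_unit; lra].
    + point_eq.
Qed.

(* Convexity makes l1 Q + l2 Q = (l1 + l2) Q: the source of the triangle inequality. *)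
Lemma homot_add l1 l2 a b c :
  0 <= l1 -> 0 <= l2 -> homot Q l1 a b -> homot Q l2 b c -> homot Q (l1 + l2) a c.
Proof.
  intros H1 H2 [w1 [Hw1 ->]] [w2 [Hw2 ->]].
  destruct (Req_dec (l1 + l2) 0) as [E|E].
  - assert (l1 = 0) by lra. assert (l2 = 0) by lra. subst.
    exists w1; split; auto. point_eq.
  - exists (padd w1 (pscale (l2 / (l1 + l2)) (psub w2 w1))). split.
    + apply (proj1 HQ); auto. apply ratio_unit; lra.
    + point_eq.
Qed.

Lemma homot_box a b l : 0 < l -> l1dist a b < l * e0 -> homot Q l a b.
Proof.
  intros Hl Hs. exists ((fst b - fst a) / l, (snd b - snd a) / l). split.
  - destruct HQ as [_ [He Hb]].
    pose proof (Rabs_pos (fst b - fst a)); pose proof (Rabs_pos (snd b - snd a)).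
    unfold l1dist in Hs. apply Hb; simpl; apply Rabs_div_lt; lra.
  - point_eq.
Qed.

Lemma homot_l1 a b eps : 0 < eps -> homot Q (l1dist a b / e0 + eps) a b.
Proof.
  intros Heps. pose proof (proj1 (proj2 HQ)) as He. pose proof (l1dist_ge0 a b).
  assert (E : l1dist a b / e0 * e0 = l1dist a b) by (field; lra).
  assert (0 <= l1dist a b / e0) by nra.
  apply homot_box; [lra|]. nra.
Qed.

Lemma dQ_spec a b :
  0 <= dQ Q a b /\ (forall l, 0 <= l -> homot Q l a b -> dQ Q a b <= l) /\
  (forall m, dQ Q a b < m -> exists l, 0 <= l /\ l < m /\ homot Q l a b).
Proof.
  unfold dQ. set (E := fun l => 0 <= l /\ homot Q l a b).
  destruct (Glb_Rbar_correct E) as [Hlb Hglb].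
  assert (HE : E (l1dist a b / e0 + 1)).
  { split; [|apply homot_l1; lra].
    pose proof (l1dist_ge0 a b). pose proof (proj1 (proj2 HQ)).
    assert (l1dist a b / e0 * e0 = l1dist a b) by (field; lra). nra. }
  assert (G0 : Rbar_le (Finite 0) (Glb_Rbar E)) by (apply Hglb; intros x [Hx _]; exact Hx).
  pose proof (Hlb _ HE) as G1.
  destruct (Glb_Rbar E) as [g| |]; simpl in G0, G1 |- *; try contradiction.
  split; [exact G0|split].
  - intros l Hl Hh. apply (Hlb l). split; auto.
  - intros m Hm. apply NNPP. intros Hn.
    assert (Hm' : Rbar_le (Finite m) (Finite g)).
    { apply Hglb. intros x [Hx Hhx]. simpl. apply Rnot_lt_le. intros Hxm. apply Hn. exists x; auto. }
    simpl in Hm'. lra.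
Qed.

Lemma dQ_ge0 a b : 0 <= dQ Q a b.
Proof. apply dQ_spec. Qed.

Lemma dQ_le a b l : 0 <= l -> homot Q l a b -> dQ Q a b <= l.
Proof. apply dQ_spec. Qed.

Lemma dQ_approx a b m : dQ Q a b < m -> exists l, 0 <= l /\ l < m /\ homot Q l a b.
Proof. apply dQ_spec. Qed.

Lemma le_of_le_eps u v : (forall eps, 0 < eps -> u <= v + eps) -> u <= v.
Proof. intros H. apply Rnot_lt_le. intros Hl. specialize (H ((u - v) / 2)). lra. Qed.

(* Triangle inequality for the gauge distance (it need not be symmetric). *)
Lemma dQ_triangle a b c : dQ Q a c <= dQ Q a b + dQ Q b c.
Proof.
  apply le_of_le_eps. intros eps He.
  destruct (dQ_approx a b (dQ Q a b + eps / 2)) as [l1 [H1 [H1' Hab]]]; [lra|].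
  destruct (dQ_approx b c (dQ Q b c + eps / 2)) as [l2 [H2 [H2' Hbc]]]; [lra|].
  pose proof (dQ_le a c (l1 + l2) ltac:(lra) (homot_add l1 l2 a b c H1 H2 Hab Hbc)). lra.
Qed.

Lemma dQ_lipschitz a b : dQ Q a b <= l1dist a b / e0.
Proof.
  apply le_of_le_eps. intros eps Heps. apply dQ_le; [|apply homot_l1; exact Heps].
  pose proof (l1dist_ge0 a b). pose proof (proj1 (proj2 HQ)).
  assert (l1dist a b / e0 * e0 = l1dist a b) by (field; lra). nra.
Qed.

Lemma homot_Qstar l y z : homot (Qstar Q) l y z <-> homot Q l z y.
Proof.
  split; intros [w [Hw ->]].
  - exists (pscale (-1) w). split; [exact Hw|point_eq].
  - exists (pscale (-1) w). split; [|point_eq].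
    unfold Qstar. replace (pscale (-1) (pscale (-1) w)) with w by point_eq. exact Hw.
Qed.

Lemma interior_ray (A : point -> Prop) q y :
  Defs.interior A q -> exists d, 0 < d /\ A (padd q (pscale d (psub q y))).
Proof.
  intros [eps [Heps Hi]].
  set (D := l1dist y q + 1).
  assert (HD : 0 < D) by (pose proof (l1dist_ge0 y q); unfold D; lra).
  exists (eps / (2 * D)). split; [apply Rdiv_lt_0_compat; lra|].
  assert (HdD : eps / (2 * D) * D = eps / 2) by (field; lra).
  assert (Hd : 0 < eps / (2 * D)) by (apply Rdiv_lt_0_compat; lra).
  assert (Hx : Rabs (fst q - fst y) < D) by
    (unfold D, l1dist; pose proof (Rabs_pos (snd q - snd y)); lra).
  assert (Hy : Rabs (snd q - snd y) < D) by
    (unfold D, l1dist; pose proof (Rabs_pos (fst q - fst y)); lra).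
  apply Hi; unfold padd, pscale, psub; simpl;
    [replace (fst q + eps / (2 * D) * (fst q - fst y) - fst q)
       with (eps / (2 * D) * (fst q - fst y)) by ring
    |replace (snd q + eps / (2 * D) * (snd q - snd y) - snd q)
       with (eps / (2 * D) * (snd q - snd y)) by ring];
    rewrite Rabs_mult, (Rabs_pos_eq (eps / (2 * D))) by lra; nra.
Qed.

Lemma interior_Qstar_lt l y q :
  0 <= l -> Defs.interior (homot (Qstar Q) l y) q -> dQ Q q y < l.
Proof.
  intros Hl Hint. destruct (Req_dec l 0) as [E|E].
  - exfalso. subst l. destruct Hint as [eps [Heps Hi]].
    assert (A1 : homot (Qstar Q) 0 y q) by (apply Hi; rewrite Rminus_diag, Rabs_R0; lra).
    assert (A2 : homot (Qstar Q) 0 y (fst q + eps / 2, snd q)).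
    { apply Hi; simpl; [|rewrite Rminus_diag, Rabs_R0; lra].
      replace (fst q + eps / 2 - fst q) with (eps / 2) by ring. rewrite Rabs_pos_eq; lra. }
    destruct A1 as [w1 [_ E1]], A2 as [w2 [_ E2]].
    destruct q, y, w1, w2; unfold padd, pscale in *; simpl in *.
    injection E1; injection E2; intros; nra.
  - assert (Hl' : 0 < l) by (destruct Hl; [lra|congruence]).
    destruct (interior_ray _ q y Hint) as [d [Hd Hz]].
    apply homot_Qstar in Hz. destruct Hz as [w [Hw Ez]].
    (* y = q + d (q - y) + l w, hence y = q + (l / (1 + d)) w *)
    assert (Hyq : homot Q (l / (1 + d)) q y).
    { exists w; split; [exact Hw|].
      destruct q as [q1 q2], y as [y1 y2], w as [w1 w2]; unfold padd, pscale, psub in *; simpl in *.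
      injection Ez; intros E2 E1.
      assert (F1 : l * w1 = (1 + d) * (y1 - q1)) by lra.
      assert (F2 : l * w2 = (1 + d) * (y2 - q2)) by lra.
      f_equal; [replace (l / (1 + d) * w1) with (l * w1 / (1 + d)) by (field; lra)
               |replace (l / (1 + d) * w2) with (l * w2 / (1 + d)) by (field; lra)];
        [rewrite F1|rewrite F2]; field; lra. }
    assert (Hpos : 0 < l / (1 + d)) by (apply Rdiv_lt_0_compat; lra).
    pose proof (dQ_le q y _ (Rlt_le _ _ Hpos) Hyq).
    assert (l / (1 + d) * (1 + d) = l) by (field; lra). nra.
Qed.

Lemma lt_interior_Qstar m y q : dQ Q q y < m -> Defs.interior (homot (Qstar Q) m y) q.
Proof.
  intros Hm. destruct (dQ_approx q y m Hm) as [l [Hl [Hlm [w [Hw Ey]]]]].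
  destruct HQ as [Hc [He Hb]].
  exists (e0 * (m - l)). split; [nra|].
  intros z Hz1 Hz2. apply homot_Qstar.
  (* z + m w' = y with w' a convex combination of w and (q - z) / (m - l) *)
  exists (padd w (pscale ((m - l) / m) (psub (pscale (/ (m - l)) (psub q z)) w))). split.
  - apply Hc; [exact Hw| |apply ratio_unit; lra].
    apply Hb; unfold pscale, psub; simpl; rewrite Rmult_comm; apply Rabs_div_lt; try lra;
      rewrite Rabs_minus_sym; nra.
  - destruct q as [q1 q2], y as [y1 y2], w as [w1 w2], z as [z1 z2];
      unfold padd, pscale, psub in *; simpl in *.
    injection Ey; intros E2 E1. rewrite E1, E2. f_equal; field; lra.
Qed.

Lemma Qstar_scale_nearest Y y r :
  In r Y -> Vcell Q Y r y -> Qstar_scale Q Y y (dQ Q r y).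
Proof.
  intros Hr Hmin. split.
  - split; [apply dQ_ge0|]. intros q Hq Hi.
    pose proof (interior_Qstar_lt _ _ _ (dQ_ge0 r y) Hi). specialize (Hmin q Hq). lra.
  - intros m [Hm Ha]. apply Rnot_lt_le. intros Hlt.
    apply (Ha r Hr). apply lt_interior_Qstar. exact Hlt.
Qed.

Lemma Qstar_scale_unique Y y l l' :
  Qstar_scale Q Y y l -> Qstar_scale Q Y y l' -> l = l'.
Proof. intros [A1 M1] [A2 M2]. apply Rle_antisym; auto. Qed.

Lemma conflicts_nearest Y p y r :
  In r Y -> Vcell Q Y r y -> (conflicts Q Y p y <-> homot Q (dQ Q r y) p y).
Proof.
  intros Hr Hv. pose proof (Qstar_scale_nearest Y y r Hr Hv) as Hs. split.
  - intros [l [Hl Hp]]. rewrite <- (Qstar_scale_unique Y y l _ Hl Hs).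
    apply homot_Qstar. exact Hp.
  - intros Hp. exists (dQ Q r y). split; [exact Hs|]. apply homot_Qstar. exact Hp.
Qed.
End Gauge.

Lemma argmin_list {A : Type} (f : A -> R) (L : list A) :
  L <> nil -> exists r, In r L /\ forall q, In q L -> f r <= f q.
Proof.
  induction L as [|a L IH]; intros Hne; [congruence|].
  destruct L as [|b L'].
  - exists a. split; [left; reflexivity|]. intros q [<-|[]]. lra.
  - destruct IH as [r [Hr Hm]]; [discriminate|].
    destruct (Rle_dec (f a) (f r)).
    + exists a. split; [left; reflexivity|]. intros q [<-|Hq]; [lra|]. specialize (Hm q Hq). lra.
    + exists r. split; [right; exact Hr|]. intros q [<-|Hq]; [lra|]. auto.
Qed.

Lemma uniform_margin {A : Type} (f : A -> R) (P : A -> Prop) c (L : list A) :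
  (forall s, In s L -> P s -> c < f s) ->
  exists m, 0 < m /\ forall s, In s L -> P s -> c + m <= f s.
Proof.
  induction L as [|a L IH]; intros H.
  - exists 1. split; [lra|]. intros s [].
  - destruct IH as [m [Hm Hms]]; [intros s Hs; apply H; right; exact Hs|].
    destruct (classic (P a)) as [Pa|Pa].
    + specialize (H a (or_introl eq_refl) Pa).
      exists (Rmin m (f a - c)). split; [apply Rmin_pos; lra|].
      pose proof (Rmin_l m (f a - c)); pose proof (Rmin_r m (f a - c)).
      intros s [<-|Hs] Ps; [lra|]. specialize (Hms s Hs Ps). lra.
    + exists m. split; [exact Hm|]. intros s [<-|Hs] Ps; [contradiction|auto].
Qed.

Lemma real_induction_01 (G : R -> Prop) : G 0 ->
  (forall t, ~ G t -> exists d, 0 < d /\ forall t', t - d < t' <= t -> ~ G t') ->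
  (forall t, 0 <= t < 1 -> G t -> exists d, 0 < d /\ forall t', t <= t' <= t + d -> G t') ->
  G 1.
Proof.
  intros G0 Hleft Hright.
  set (A := fun t => 0 <= t <= 1 /\ forall u, 0 <= u <= t -> G u).
  destruct (completeness A) as [s [Hub Hlub]].
  { exists 1. intros t [Ht _]. lra. }
  { exists 0. split; [lra|]. intros u Hu. replace u with 0 by lra. exact G0. }
  assert (Hs0 : 0 <= s).
  { apply Hub. split; [lra|]. intros u Hu. replace u with 0 by lra. exact G0. }
  assert (Hs1 : s <= 1) by (apply Hlub; intros t [Ht _]; lra).
  assert (Hbelow : forall u, 0 <= u < s -> G u).
  { intros u Hu. apply NNPP. intros Hn.
    assert (s <= u); [|lra].
    apply Hlub. intros t [Ht Hg]. apply Rnot_lt_le. intros Hut. apply Hn, Hg. lra. }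
  assert (Gs : G s).
  { apply NNPP. intros Hn. destruct (Hleft s Hn) as [d [Hd Hd']].
    destruct (Req_dec s 0) as [E|E]; [rewrite E in Hn; auto|].
    set (u := Rmax 0 (s - d / 2)).
    pose proof (Rmax_l 0 (s - d / 2)); pose proof (Rmax_r 0 (s - d / 2)).
    assert (u < s) by (unfold u; apply Rmax_lub_lt; lra).
    apply (Hd' u); [unfold u in *; lra|]. apply Hbelow. unfold u in *; lra. }
  destruct (Req_dec s 1) as [E|E]; [rewrite <- E; exact Gs|].
  destruct (Hright s ltac:(lra) Gs) as [d [Hd Hd']].
  set (v := Rmin 1 (s + d)).
  pose proof (Rmin_l 1 (s + d)); pose proof (Rmin_r 1 (s + d)).
  assert (s < v) by (unfold v; apply Rmin_glb_lt; lra).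
  assert (Av : A v).
  { split; [unfold v in *; lra|]. intros u Hu. destruct (Rle_dec u s).
    - destruct (Req_dec u s) as [->|Ne]; [exact Gs|apply Hbelow; lra].
    - apply Hd'. unfold v in *; lra. }
  pose proof (Hub v Av). lra.
Qed.

Lemma Vcell_exists Q Y y : Y <> nil -> exists r, In r Y /\ Vcell Q Y r y.
Proof. apply (argmin_list (fun q => dQ Q q y)). Qed.

Lemma Vcell_incl Q Y Z q x : incl Y Z -> Vcell Q Z q x -> Vcell Q Y q x.
Proof. intros HYZ Hv s Hs. apply Hv, HYZ, Hs. Qed.

(* Suppose p reaches x with the copy l Q + p,
   no site of Rs is closer than l to x, and Rs contains every site of S whose
   cell is conflicted by p.  Walking from p to x along the segment
   seg t = p + t (x - p), the copy (t l) Q + p keeps reaching seg t, and we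
   show that no site of S ever gets closer than t l to seg t: sites of Rs are
   kept away by the triangle inequality, and the nearest sites of S to a point
   of the segment are conflicted by p, hence in Rs, so the other sites keep a
   positive margin for a short while. *)
Section ConflictPropagation.
Variables (Q : point -> Prop) (e0 : R) (S Rs : list point) (p x : point) (l : R).
Hypothesis HQ : gauge_body Q e0.
Hypothesis Hl : 0 <= l.
Hypothesis Hpx : homot Q l p x.
Hypothesis HRs : forall q, In q Rs -> l <= dQ Q q x.
Hypothesis Hclosed :
  forall q, In q S -> (exists y, Vcell Q S q y /\ conflicts Q S p y) -> In q Rs.

Let seg (t : R) : point := padd p (pscale t (psub x p)).
Let K : R := l1dist p x / e0.

Lemma seg_homot_start t : homot Q (t * l) p (seg t).
Proof.
  destruct Hpx as [w [Hw Ex]]. exists w. split; [exact Hw|].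
  unfold seg. rewrite Ex. point_eq.
Qed.

Lemma seg_homot_end t : homot Q ((1 - t) * l) (seg t) x.
Proof.
  destruct Hpx as [w [Hw Ex]]. exists w. split; [exact Hw|].
  unfold seg. rewrite Ex. point_eq.
Qed.

Lemma seg_lipschitz a b : dQ Q (seg a) (seg b) <= Rabs (b - a) * K.
Proof.
  eapply Rle_trans; [apply (dQ_lipschitz Q e0 HQ)|]. right.
  unfold K, seg, l1dist, padd, pscale, psub; simpl.
  replace (fst p + b * (fst x - fst p) - (fst p + a * (fst x - fst p)))
    with ((b - a) * (fst x - fst p)) by ring.
  replace (snd p + b * (snd x - snd p) - (snd p + a * (snd x - snd p)))
    with ((b - a) * (snd x - snd p)) by ring.
  rewrite !Rabs_mult. field. exact (Rgt_not_eq _ _ (proj1 (proj2 HQ))).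
Qed.

Lemma K_ge0 : 0 <= K.
Proof.
  unfold K. pose proof (l1dist_ge0 p x). pose proof (proj1 (proj2 HQ)).
  assert (l1dist p x / e0 * e0 = l1dist p x) by (field; lra). nra.
Qed.

Lemma Rs_stay_far t q : t <= 1 -> In q Rs -> t * l <= dQ Q q (seg t).
Proof.
  intros Ht Hq.
  assert (Hrest : 0 <= (1 - t) * l) by nra.
  pose proof (dQ_le Q e0 HQ _ _ _ Hrest (seg_homot_end t)).
  pose proof (dQ_triangle Q e0 HQ q (seg t) x).
  pose proof (HRs q Hq). lra.
Qed.

Let far (t : R) : Prop := forall s, In s S -> t * l <= dQ Q s (seg t).

Lemma far_failure_persists_left t :
  ~ far t -> exists d, 0 < d /\ forall t', t - d < t' <= t -> ~ far t'.
Proof.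
  intros Hn.
  destruct (classic (exists s, In s S /\ dQ Q s (seg t) < t * l)) as [[s [Hs Hlt]]|Hno].
  2:{ exfalso. apply Hn. intros s Hs. apply Rnot_lt_le. intros Hlt. apply Hno. eauto. }
  set (mg := t * l - dQ Q s (seg t)).
  assert (Hmg : 0 < mg) by (unfold mg; lra).
  pose proof K_ge0.
  exists (mg / (2 * (K + l + 1))). split; [apply Rdiv_lt_0_compat; lra|].
  intros t' Ht' Hfar. specialize (Hfar s Hs).
  pose proof (dQ_triangle Q e0 HQ s (seg t) (seg t')).
  pose proof (seg_lipschitz t t') as Hwalk.
  rewrite Rabs_minus_sym, Rabs_pos_eq in Hwalk by lra.
  (* (t - t') (K + l) < mg, which contradicts the two bounds above *)
  assert (Hbound : mg / (2 * (K + l + 1)) * (K + l + 1) = mg / 2) by (field; lra).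
  assert ((t - t') * (K + l + 1) < mg) by nra.
  unfold mg in *. nra.
Qed.

Lemma far_persists_right t0 :
  0 <= t0 < 1 -> far t0 -> exists d, 0 < d /\ forall t', t0 <= t' <= t0 + d -> far t'.
Proof.
  intros Ht0 Hfar0.
  destruct (classic (S = nil)) as [E|HSne].
  { exists 1. split; [lra|]. intros t' _ s Hs. rewrite E in Hs. destruct Hs. }
  set (y0 := seg t0).
  destruct (Vcell_exists Q S y0 HSne) as [r [Hr Hrmin]].
  (* p conflicts with y0 w.r.t. S, so every nearest site of y0 lies in Rs *)
  assert (Hconf : conflicts Q S p y0).
  { apply (conflicts_nearest Q e0 HQ S p y0 r Hr Hrmin).
    apply (homot_mono Q e0 HQ (t0 * l)); [nra|apply Hfar0, Hr|apply seg_homot_start]. }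
  assert (Hnear : forall s, In s S -> ~ In s Rs -> dQ Q r y0 < dQ Q s y0).
  { intros s Hs Hn. apply Rnot_le_lt. intros Hle. apply Hn, Hclosed; [exact Hs|].
    exists y0. split; [|exact Hconf]. intros q Hq. specialize (Hrmin q Hq). lra. }
  destruct (uniform_margin (fun s => dQ Q s y0) (fun s => ~ In s Rs) (dQ Q r y0) S Hnear)
    as [m [Hm Hms]].
  pose proof K_ge0.
  exists (Rmin (1 - t0) (m / (K + l + 1))). split.
  { apply Rmin_pos; [lra|apply Rdiv_lt_0_compat; lra]. }
  intros t' Ht' s Hs.
  pose proof (Rmin_l (1 - t0) (m / (K + l + 1))).
  pose proof (Rmin_r (1 - t0) (m / (K + l + 1))).
  destruct (classic (In s Rs)) as [HsR|HsR]; [apply Rs_stay_far; [lra|exact HsR]|].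
  specialize (Hms s Hs HsR). simpl in Hms.
  pose proof (dQ_triangle Q e0 HQ s (seg t') y0).
  pose proof (seg_lipschitz t' t0) as Hwalk.
  rewrite Rabs_minus_sym, Rabs_pos_eq in Hwalk by lra.
  pose proof (Hfar0 r Hr).
  (* (t' - t0) (K + l) <= m absorbs both the walk and the growth of t l *)
  assert (Hbound : m / (K + l + 1) * (K + l + 1) = m) by (field; lra).
  assert ((t' - t0) * (K + l + 1) <= m) by nra.
  unfold y0 in *. nra.
Qed.

Lemma conflict_keeps_sites_far : forall s, In s S -> l <= dQ Q s x.
Proof.
  assert (Hfar1 : far 1).
  { apply real_induction_01.
    - intros s _. rewrite Rmult_0_l. apply (dQ_ge0 Q e0 HQ).
    - exact far_failure_persists_left.
    - exact far_persists_right. }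
  intros s Hs. specialize (Hfar1 s Hs).
  replace (seg 1) with x in Hfar1 by (unfold seg; point_eq). lra.
Qed.
End ConflictPropagation.

(* If the sites of S nearest to x all belong to Rs (and some belong to it),
   then Rs and S have the same cells around x: far sites of S keep a margin
   that a small move of the point cannot eat up. *)
Lemma nearby_cells_agree Q e0 S Rs x r0 :
  gauge_body Q e0 -> In r0 Rs -> Vcell Q S r0 x ->
  (forall s, In s S -> Vcell Q S s x -> In s Rs) ->
  exists d, 0 < d /\ forall z,
    Rabs (fst z - fst x) < d -> Rabs (snd z - snd x) < d ->
    forall q, In q Rs -> Vcell Q Rs q z -> Vcell Q S q z.
Proof.
  intros HQ Hr0 Hv0 Hsel. pose proof (proj1 (proj2 HQ)) as He0.
  assert (Hfar : forall s, In s S -> ~ In s Rs -> dQ Q r0 x < dQ Q s x).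
  { intros s Hs Hn. apply Rnot_le_lt. intros Hle. apply Hn, Hsel; [exact Hs|].
    intros q Hq. specialize (Hv0 q Hq). lra. }
  destruct (uniform_margin (fun s => dQ Q s x) (fun s => ~ In s Rs) (dQ Q r0 x) S Hfar)
    as [m [Hm Hms]].
  exists (m * e0 / 8). split; [nra|].
  intros z Hz1 Hz2 q Hq Hv s Hs.
  destruct (classic (In s Rs)) as [HsR|HsR]; [apply Hv, HsR|].
  specialize (Hms s Hs HsR). simpl in Hms.
  (* moving from x to z changes gauge distances by less than m / 4 *)
  assert (Hsmall : forall a b, l1dist a b = Rabs (fst z - fst x) + Rabs (snd z - snd x) ->
                               dQ Q a b < m / 4).
  { intros a b Hab. eapply Rle_lt_trans; [apply (dQ_lipschitz Q e0 HQ)|].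
    assert (E : l1dist a b / e0 * e0 = l1dist a b) by (field; lra). nra. }
  assert (Hxz : dQ Q x z < m / 4) by (apply Hsmall; reflexivity).
  assert (Hzx : dQ Q z x < m / 4).
  { apply Hsmall. unfold l1dist. rewrite (Rabs_minus_sym (fst x)), (Rabs_minus_sym (snd x)).
    reflexivity. }
  pose proof (dQ_triangle Q e0 HQ s z x). pose proof (dQ_triangle Q e0 HQ r0 x z).
  specialize (Hv r0 Hr0). lra.
Qed.

(* Voronoi vertices and bends are local features: if Rs and S have the same
   cells around x and every nearest site of x in S lies in Rs, a feature of
   Vor(Rs) at x is a feature of Vor(S) at x. *)
Lemma Vor_feature_transfer Q Y Z x d :
  0 < d -> incl Y Z ->
  (forall z, Rabs (fst z - fst x) < d -> Rabs (snd z - snd x) < d ->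
     forall q, In q Y -> Vcell Q Y q z -> Vcell Q Z q z) ->
  (forall q, In q Z -> Vcell Q Z q x -> In q Y) ->
  Vor_feature Q Y x -> Vor_feature Q Z x.
Proof.
  intros Hd HYZ Hloc Hsel.
  assert (Hat : forall q, In q Y -> Vcell Q Y q x -> Vcell Q Z q x).
  { intros q Hq Hv. apply (Hloc x); [rewrite Rminus_diag, Rabs_R0; lra
                                    |rewrite Rminus_diag, Rabs_R0; lra|exact Hq|exact Hv]. }
  assert (Hvertex : Vor_vertex Q Y x -> Vor_vertex Q Z x).
  { intros (p1 & p2 & p3 & H1 & H2 & H3 & N12 & N13 & N23 & V1 & V2 & V3).
    exists p1, p2, p3. repeat split; auto. }
  intros [(a & b & Ha & Hb & Hab & Va & Vb & Hnv & Hline) | Hv]; [left|right; auto].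
  exists a, b. repeat split; auto.
  - intros (p1 & p2 & p3 & H1 & H2 & H3 & N12 & N13 & N23 & V1 & V2 & V3).
    apply Hnv. exists p1, p2, p3.
    repeat split; auto; apply (Vcell_incl Q Y Z); auto.
  - (* the edge of Vor(S) near x contains the edge of Vor(Rs) near x *)
    intros eps Heps [c [dir [Hdir Hl]]].
    apply (Hline (Rmin eps d)); [apply Rmin_pos; auto|].
    exists c, dir. split; [exact Hdir|].
    intros z (Vz1 & Vz2 & Hz1 & Hz2). apply Hl.
    pose proof (Rmin_l eps d). pose proof (Rmin_r eps d).
    repeat split; try lra; apply (Hloc z); auto; lra.
Qed.

Theorem mainTheorem6 :
  forall (Q : point -> Prop), good_Q Q ->
  forall (S I : list point),
    (forall p, In p I -> ~ In p S) ->
    general_position Q (S ++ I) ->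
  forall (Rs : list point),
    incl Rs S ->
    (forall q, In q S ->
       (exists p, In p I /\ conflicts_set Q S p (Vcell Q S q)) -> In q Rs) ->
  forall x : point,
    Vor_feature Q Rs x ->
    (exists p, In p I /\ conflicts Q Rs p x) ->
    exists p, In p I /\ Vor_feature Q S x /\ conflicts Q S p x.
Proof.
  intros Q HQ S I _ _ Rs Hincl Hsel x Hfeat [p [HpI Hconf]].
  destruct (good_Q_gauge_body Q HQ) as [e0 HQ'].
  (* a nearest site r0 of x in Rs; it exists since features need sites *)
  assert (HRne : Rs <> nil).
  { destruct Hfeat as [(a & _ & Ha & _) | (a & _ & _ & Ha & _)]; intros E; rewrite E in Ha; auto. }
  destruct (Vcell_exists Q Rs x HRne) as [r0 [Hr0 Hv0]].
  apply (conflicts_nearest Q e0 HQ' Rs p x r0 Hr0 Hv0) in Hconf.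
  (* p's conflict propagates: r0 is also a nearest site of x in S *)
  assert (Hv0S : Vcell Q S r0 x).
  { intros s Hs. apply (conflict_keeps_sites_far Q e0 S Rs p x (dQ Q r0 x) HQ');
      [apply (dQ_ge0 Q e0 HQ')|exact Hconf|exact Hv0| |exact Hs].
    intros q Hq Hy. apply Hsel; [exact Hq|]. exists p; split; [exact HpI|exact Hy]. }
  assert (HconfS : conflicts Q S p x)
    by (apply (conflicts_nearest Q e0 HQ' S p x r0); auto).
  (* hence every nearest site of x in S is in Rs, and the diagrams agree near x *)
  assert (HselS : forall s, In s S -> Vcell Q S s x -> In s Rs).
  { intros s Hs Hv. apply Hsel; [exact Hs|]. exists p. split; [exact HpI|]. exists x; auto. }
  destruct (nearby_cells_agree Q e0 S Rs x r0 HQ' Hr0 Hv0S HselS) as [d [Hd Hloc]].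
  exists p. split; [exact HpI|]. split; [|exact HconfS].
  exact (Vor_feature_transfer Q Rs S x d Hd Hincl Hloc HselS Hfeat).
Qed.
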